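(* Let $A = \langle \Sigma, Q, q_0, \tau, \phi\rangle$ be an NFA in which every state is reachable from the initial state, and let $\Psi$ be a merge operation producing the NFA $\Psi(A)$. If $A$ contains a single closed communicating class, then $\Psi(A)$ also contains a single closed communicating class.
   Context: An NFA $A = \langle \Sigma, Q, q_0, \tau, \phi\rangle$ has finite alphabet $\Sigma$, finite state set $Q$, initial state $q_0$, transition function $\tau : Q\times\Sigma \to 2^Q$, termination function $\phi: Q \to \{0,1\}$; $\tau$ extends to strings by $\tau(q,\lambda)=\{q\}$, $\tau(q,x\sigma) = \bigcup_{q'\in\tau(q,x)}\tau(q',\sigma)$, and $\tau_\star(S) = \bigcup_{q\in S, x\in\Sigma^\star}\tau(q,x)$. A state $q$ is reachable if $q \in \tau_\star(\{q_0\})$. States $q,q'$ communicate if $q' \in \tau_\star(\{q\})$ and $q\in\tau_\star(\{q'\})$; the equivalence classes are communicating classes; a class $Q'$ is closed if $\tau_\star(Q') = Q'$. $\tilde{A} = \langle \Sigma, \tilde{Q}, \tilde{q}_0, \tilde{\tau}, \tilde{\phi}\rangle$ is obtained from $A$ by a merge operation $\Psi : Q \to \tilde{Q}$ if $\Psi$ is surjective, $\Psi(q_0) = \tilde{q}_0$, $\phi(q) = \tilde{\phi}(\Psi(q))$ for all $q \in Q$, and for all $q\in Q$, $\sigma \in \Sigma$, $q' \in \tau(q,\sigma)$ implies $\Psi(q') \in \tilde{\tau}(\Psi(q),\sigma)$; we write $\Psi(A)$ for $\tilde{A}$. *)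

From mathcomp Require Import all_boot.
Set Implicit Arguments. Unset Strict Implicit. Unset Printing Implicit Defensive.

Record nfa (Sigma Q : finType) := NFA {
  init : Q;
  trans : Q -> Sigma -> {set Q};
  final : Q -> bool }.

Section NFA.
Variables (Sigma Q : finType) (A : nfa Sigma Q).

Definition trans_str (q : Q) (x : seq Sigma) : {set Q} :=
  foldl (fun (S : {set Q}) s => \bigcup_(p in S) trans A p s) [set q] x.

Definition trans_star (S : {set Q}) : Q -> Prop :=
  fun q' => exists q, q \in S /\ exists x : seq Sigma, q' \in trans_str q x.

Definition reachable (q : Q) : Prop := trans_star [set init A] q.

Definition communicate (q q' : Q) : Prop :=
  trans_star [set q] q' /\ trans_star [set q'] q.

Definition comm_class (C : {set Q}) : Prop :=
  exists q, forall q', q' \in C <-> communicate q q'.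

Definition closed_class (C : {set Q}) : Prop :=
  comm_class C /\ forall q', trans_star C q' <-> q' \in C.

Definition single_closed_class : Prop :=
  exists! C : {set Q}, closed_class C.

End NFA.

Definition merge_op (Sigma Q Q' : finType) (A : nfa Sigma Q) (B : nfa Sigma Q')
  (Psi : Q -> Q') : Prop :=
  [/\ forall q' : Q', exists q, Psi q = q',
      Psi (init A) = init B,
      forall q, final A q = final B (Psi q)
    & forall q s q', q' \in trans A q s -> Psi q' \in trans B (Psi q) s].

(* Reachability in a finite NFA has terminal states (those reaching only states
   that reach them back), and the states reachable from a terminal state form a
   closed communicating class.  If [A] has a single closed class [D], then every
   state of [A] reaches a fixed [d \in D], so by surjectivity of [Psi] every
   state of [Psi(A)] reaches [Psi d].  Hence [Psi d] lies in every closed class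
   of [Psi(A)], and two communicating classes with a common state coincide. *)
From mathcomp Require Import all_boot.
Set Implicit Arguments. Unset Strict Implicit. Unset Printing Implicit Defensive.

Lemma connect_homo (T T' : finType) (e : rel T) (e' : rel T') (f : T -> T') :
  {homo f : x y / e x y >-> e' x y} ->
  {homo f : x y / connect e x y >-> connect e' x y}.
Proof.
move=> homo_f x _ /connectP[p e_p ->]; elim: p x e_p => [|y p IHp] x /=.
  by rewrite connect0.
by case/andP=> /homo_f/connect1/connect_trans fxy /IHp; apply: fxy.
Qed.

Section Reachability.
Variables (Sigma Q : finType) (A : nfa Sigma Q).

Definition step : rel Q := fun p q => [exists s, q \in trans A p s].

Lemma trans_str_rcons q x s :
  trans_str A q (rcons x s) = \bigcup_(p in trans_str A q x) trans A p s.
Proof. by rewrite /trans_str foldl_rcons. Qed.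

Lemma trans_str_cat q x y :
  trans_str A q (x ++ y) = \bigcup_(p in trans_str A q x) trans_str A p y.
Proof.
elim/last_ind: y => [|y s IHy].
  rewrite cats0; apply/setP=> q'; apply/idP/bigcupP => [q'_x|[p p_x]].
    by exists q' => //; rewrite /trans_str /= set11.
  by rewrite /trans_str /= => /set1P ->.
rewrite -rcons_cat !trans_str_rcons IHy.
apply/setP=> q'; apply/bigcupP/bigcupP => [[r /bigcupP[p p_x r_p] q'_r]|[p p_x]].
  by exists p => //; rewrite trans_str_rcons; apply/bigcupP; exists r.
rewrite trans_str_rcons => /bigcupP[r r_p q'_r].
by exists r => //; apply/bigcupP; exists p.
Qed.

Lemma trans_str1 p s : trans_str A p [:: s] = trans A p s.
Proof.
apply/setP=> q; rewrite /trans_str /=; apply/bigcupP/idP => [[r /set1P ->]//|].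
by exists p; rewrite ?set11.
Qed.

Lemma connect_stepP q q' :
  reflect (exists x, q' \in trans_str A q x) (connect step q q').
Proof.
apply: (iffP idP) => [/connectP[p step_p ->]|[x]].
  elim: p q step_p => [|r p IHp] q /=; first by exists [::]; rewrite set11.
  case/andP=> /existsP[s r_qs] /IHp[x r_x]; exists (s :: x).
  by rewrite -cat1s trans_str_cat; apply/bigcupP; exists r; rewrite ?trans_str1.
elim/last_ind: x q' => [|x s IHx] q'; first by move=> /set1P ->; rewrite connect0.
rewrite -cats1 trans_str_cat => /bigcupP[p /IHx q_p]; rewrite trans_str1 => q'_p.
by apply: connect_trans q_p (connect1 _); apply/existsP; exists s.
Qed.

Lemma trans_starP (S : {set Q}) q' :
  trans_star A S q' <-> exists2 q, q \in S & connect step q q'.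
Proof.
split=> [[q [q_S /connect_stepP]]|[q q_S /connect_stepP]]; first by exists q.
by exists q.
Qed.

Lemma communicateP q q' :
  communicate A q q' <-> connect step q q' /\ connect step q' q.
Proof.
split=> [[/trans_starP[_ /set1P -> ?] /trans_starP[_ /set1P -> ?]] //|[? ?]].
by split; apply/trans_starP; [exists q|exists q']; rewrite ?set11.
Qed.

End Reachability.

Section ClosedClasses.
Variables (Sigma Q : finType) (A : nfa Sigma Q).

Definition reach (x : Q) : {set Q} := [set y | connect (step A) x y].

Definition terminal (x : Q) : Prop :=
  forall y, connect (step A) x y -> connect (step A) y x.

(* A reachable state with the fewest successors is terminal. *)
Lemma exists_terminal q : exists2 x, connect (step A) q x & terminal x.
Proof.
have [x q_x min_x] :=
  @arg_minnP _ q (connect (step A) q) (fun x => #|reach x|) (connect0 _ q).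
exists x => // y x_y.
have reach_y_sub : reach y \subset reach x.
  by apply/subsetP=> z; rewrite !inE; apply: connect_trans.
have /eqP reach_yx : reach y == reach x.
  by rewrite eqEcard reach_y_sub min_x //; apply: connect_trans x_y.
have : x \in reach y by rewrite reach_yx inE connect0.
by rewrite inE.
Qed.

Lemma terminal_closed_class x : terminal x -> closed_class A (reach x).
Proof.
move=> term_x; split.
  exists x => q; rewrite inE; split=> [x_q|/communicateP[] //].
  by apply/communicateP; split=> //; apply: term_x.
move=> q; rewrite inE; split=> [/trans_starP[p] | x_q].
  by rewrite inE => x_p /(connect_trans x_p).
by apply/trans_starP; exists x; rewrite ?inE.
Qed.

Lemma closed_class_connect C q q' :
  closed_class A C -> q \in C -> connect (step A) q q' -> q' \in C.
Proof. by case=> _ closedC q_C q_q'; apply/closedC/trans_starP; exists q. Qed.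

Lemma closed_class_inhabited C : closed_class A C -> exists q, q \in C.
Proof. by case=> -[q memC] _; exists q; apply/memC/communicateP; rewrite connect0. Qed.

Lemma comm_class_mem C z : comm_class A C -> z \in C ->
  C = [set y | connect (step A) z y && connect (step A) y z].
Proof.
case=> c memC /memC/communicateP[c_z z_c]; apply/setP=> y; rewrite inE.
apply/idP/andP=> [/memC/communicateP[c_y y_c] | [z_y y_z]].
  by split; [apply: connect_trans z_c c_y | apply: connect_trans y_c c_z].
apply/memC/communicateP.
by split; [apply: connect_trans c_z z_y | apply: connect_trans y_z z_c].
Qed.

End ClosedClasses.

Lemma merge_step (Sigma Q Q' : finType) (A : nfa Sigma Q) (B : nfa Sigma Q')
    (Psi : Q -> Q') :
  merge_op A B Psi -> {homo Psi : p q / step A p q >-> step B p q}.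
Proof.
by case=> _ _ _ homo p q /existsP[s q_ps]; apply/existsP; exists s; apply: homo.
Qed.

Theorem lemma6 (Sigma Q Q' : finType) (A : nfa Sigma Q) (B : nfa Sigma Q')
  (Psi : Q -> Q') :
  merge_op A B Psi ->
  (forall q : Q, reachable A q) ->
  single_closed_class A ->
  single_closed_class B.
Proof.
move=> merge _ [D [closedD uniqD]].
have [d d_D] := closed_class_inhabited closedD.
have connect_d q : connect (step A) q d.
  have [x q_x /terminal_closed_class closed_x] := exists_terminal A q.
  by move: d_D; rewrite (uniqD _ closed_x) inE; apply: connect_trans.
have Psi_d_closed C : closed_class B C -> Psi d \in C.
  move=> closedC; have [c c_C] := closed_class_inhabited closedC.
  have [surj _ _ _] := merge; have [q def_c] := surj c; rewrite -def_c in c_C.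
  exact: closed_class_connect closedC c_C (connect_homo (merge_step merge) _).
have [x _ /terminal_closed_class closed_x] := exists_terminal B (init B).
exists (reach B x); split=> // C closedC.
by rewrite (comm_class_mem closed_x.1 (Psi_d_closed _ closed_x))
           (comm_class_mem closedC.1 (Psi_d_closed _ closedC)).
Qed.
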